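(* Let $P$ be a partition of $\{1,\dots,n+1\}$ and $P'$ a partition of $\{1,\dots,n'+1\}$ ($n,n'\ge 2$). If the groups $Cox({\cal K}(P))$ and $Cox({\cal K}(P'))$ are isomorphic, then the complexes ${\cal K}(P)$ and ${\cal K}(P')$ are isomorphic.
   Context: For a partition $P=(P_1,\dots,P_t)$ of $\{1,\dots,n+1\}$, ${\cal K}(P)$ is the simplicial complex on the vertex set $\{1,\dots,n+1\}\cup\{p_1,\dots,p_t\}$ ($t$ new vertices) whose $n$-faces are the sets $\{y_1,\dots,y_{n+1}\}$ with, for each $i$, $y_i=i$ or $y_i=p_j$ where $i\in P_j$, subject to the $y_i$ being pairwise distinct; its faces are all nonempty subsets of these. For $i\in\{1,\dots,n+1\}$ with $i\in P_j$, let $g_i$ be the permutation of the vertex set of ${\cal K}(P)$ exchanging $i$ and $p_j$ and fixing all other vertices (an automorphism of ${\cal K}(P)$). $Cox({\cal K}(P))$ is the group generated by $g_1,\dots,g_{n+1}$. Complexes are isomorphic if there is a vertex bijection mapping faces exactly onto faces. *)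

From mathcomp Require Import all_boot all_fingroup.
Set Implicit Arguments. Unset Strict Implicit. Unset Printing Implicit Defensive.

(* A partition P = (P_1,...,P_t) of {1,...,n+1} is encoded by its block
   labelling lab : 'I_(n+1) -> 'I_t, with P_j = lab^-1(j); we require lab to be
   surjective (blocks are nonempty).  Element i of {1..n+1} is ordinal i-1. *)
Definition is_partition_lab (m t : nat) (lab : 'I_m -> 'I_t) : Prop :=
  forall j : 'I_t, exists i : 'I_m, lab i = j.

(* Vertex set of K(P): the original vertices (inl i) and the new vertices
   p_j (inr j). *)
Definition KVert (m t : nat) : finType := ('I_m + 'I_t)%type.

(* For a choice c (c i = true means y_i = p_j with i in P_j, else y_i = i). *)
Definition yvert (m t : nat) (lab : 'I_m -> 'I_t) (c : {ffun 'I_m -> bool})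
  (i : 'I_m) : KVert m t :=
  if c i then inr (lab i) else inl i.

Definition is_facet (m t : nat) (lab : 'I_m -> 'I_t) (S : {set KVert m t}) : bool :=
  [exists c : {ffun 'I_m -> bool},
     injectiveb (yvert lab c) && (S == [set yvert lab c i | i : 'I_m])].

Definition is_face (m t : nat) (lab : 'I_m -> 'I_t) (S : {set KVert m t}) : bool :=
  (S != set0) && [exists F : {set KVert m t}, is_facet lab F && (S \subset F)].

Definition gen (m t : nat) (lab : 'I_m -> 'I_t) (i : 'I_m) : {perm KVert m t} :=
  tperm (inl i) (inr (lab i)).

Definition Cox (m t : nat) (lab : 'I_m -> 'I_t) : {group {perm KVert m t}} :=
  <<[set gen lab i | i : 'I_m]>>%G.

Definition complex_iso (m t m' t' : nat) (lab : 'I_m -> 'I_t) (lab' : 'I_m' -> 'I_t')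
  : Prop :=
  exists f : KVert m t -> KVert m' t',
    bijective f /\ forall S : {set KVert m t}, is_face lab S = is_face lab' (f @: S).

(* Cox(K(P)) is generated by the transpositions (i p_j) with i in P_j, and these
   generate exactly the permutations preserving every block B_j = P_j + {p_j};
   hence Cox(K(P)) is the direct product of the symmetric groups Sym(B_j).
   From this group one reads off the multiset of block sizes |B_j| >= 2:
   blocks of size k >= 5 are counted by the composition factors of order k!/2
   (the alternating groups), blocks of size 2 by the order 2^c of the centre,
   and blocks of sizes 3 and 4 then by the 2- and 3-adic valuations of the
   group order prod_j |B_j|!.  Finally, K(P) is determined up to isomorphism by
   this multiset: a set of vertices is a face iff it is nonempty and contains
   no whole block, so any bijection of vertices mapping blocks onto blocks of
   the same size is an isomorphism of complexes. *)

From mathcomp Require Import all_boot all_fingroup all_solvable zify.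
Set Implicit Arguments. Unset Strict Implicit. Unset Printing Implicit Defensive.

Section CompositionFactors.
Local Open Scope group_scope.

Definition factor_orders (gT : finGroupType) (G : {group gT}) (s : seq {group gT}) :=
  pairmap (fun A B : {group gT} => #|A| %/ #|B|) G s.

(* The number of composition factors of order m, read off an arbitrary composition
   series; by Jordan-Hoelder it does not depend on the series (ncompE). *)
Definition ncomp (gT : finGroupType) (G : {group gT}) (m : nat) : nat :=
  count_mem m (factor_orders G (xchoose (exists_comps G))).

Variable gT : finGroupType.
Implicit Types A G H N : {group gT}.

Lemma factor_orders_sections G s : comps G s ->
  map (fun r => #|section_group r|) (pairmap (@mkSec gT) G s) = factor_orders G s.
Proof.
elim: s G => [|H s IH] G //= cs.
have mx : maxnormal H G G by case/andP: cs => _ /= /andP[].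
rewrite IH; last exact: comps_cons cs.
congr (_ :: _); rewrite /= card_quotient ?normal_norm ?maxnormal_normal //.
by rewrite divgS // (maxnormal_sub mx).
Qed.

Lemma perm_factor_orders G s1 s2 : comps G s1 -> comps G s2 ->
  perm_eq (factor_orders G s1) (factor_orders G s2).
Proof.
move=> c1 c2; rewrite -(factor_orders_sections c1) -(factor_orders_sections c2).
have := perm_map (fun r => #|section_group r|) (JordanHolderUniqueness c1 c2).
rewrite /mkfactors -!map_comp.
have E : (fun r => #|section_group r|) \o @section_repr gT =1 fun r => #|section_group r|.
  by move=> r; rewrite /= (card_isog (section_reprP r)).
by rewrite !(eq_map E).
Qed.

Lemma ncompE G s m : comps G s -> ncomp G m = count_mem m (factor_orders G s).
Proof.
by move=> cs; apply/seq.permP/perm_factor_orders => //; apply: xchooseP.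
Qed.

Lemma ncomp1 m : ncomp (1%G : {group gT}) m = 0.
Proof. by rewrite (@ncompE _ [::]) // /comps /= eqxx. Qed.

Lemma ncomp_simple G m : simple G -> ncomp G m = (m == #|G|).
Proof.
move=> sG; rewrite (@ncompE _ [:: 1%G]) /= ?cards1 ?divn1 1?eq_sym ?addn0 //.
by rewrite /comps eqxx /= andbT -simple_maxnormal.
Qed.

Lemma comps_sub G s : comps G s -> all (fun K : {group gT} => K \subset G) s.
Proof.
elim: s G => [|H s IH] G //= cs.
have mx : maxnormal H G G by case/andP: cs => _ /= /andP[].
have sHG := maxnormal_sub mx.
rewrite sHG /=; apply/allP => K /(allP (IH _ (comps_cons cs))) sKH.
exact: subset_trans sKH sHG.
Qed.

Lemma factor_orders_le G A s : A \subset G ->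
  all (fun K : {group gT} => K \subset G) s -> all (fun k => k <= #|G|) (factor_orders A s).
Proof.
elim: s A => [|H s IH] A sAG //= /andP[sHG sG].
by rewrite IH // andbT (leq_trans (leq_div _ _)) ?subset_leq_card.
Qed.

Lemma ncomp_gt_card G m : #|G| < m -> ncomp G m = 0.
Proof.
move=> ltGm; have cs := xchooseP (exists_comps G).
have /allP le_sG := factor_orders_le (subxx G) (comps_sub cs).
apply/eqP; rewrite -leqn0 leqNgt -has_count; apply/hasPn => k /le_sG leGk.
by apply: contraTneq ltGm => <-; rewrite -leqNgt.
Qed.

Lemma comps_cosetpre N sN (Q : {group coset_of N}) sQ :
  comps N sN -> comps Q sQ ->
  comps (coset N @*^-1 Q)%G ([seq (coset N @*^-1 K)%G | K <- sQ] ++ sN) /\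
  factor_orders (coset N @*^-1 Q)%G ([seq (coset N @*^-1 K)%G | K <- sQ] ++ sN)
    = factor_orders Q sQ ++ factor_orders N sN.
Proof.
move=> cN; elim: sQ Q => [|H sQ IH] Q cQ /=.
  suff -> : (coset N @*^-1 Q)%G = N by [].
  by apply/val_inj; case/andP: cQ => /= /eqP -> _; rewrite cosetpre1.
have mx : maxnormal H Q Q by case/andP: cQ => _ /= /andP[].
have [c2 e2] := IH H (comps_cons cQ).
split; last by rewrite e2 !card_cosetpre divnMl.
case/andP: c2 => l2 p2; rewrite /comps /= l2 /= p2 andbT.
have nsN (K : {group coset_of N}) : N <| coset N @*^-1 K.
  exact: normalS (sub_cosetpre _) (morphpre_sub _ _) (normalG N).
have nsHQ : coset N @*^-1 H <| coset N @*^-1 Q.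
  by rewrite cosetpre_normal maxnormal_normal.
rewrite -quotient_simple //.
rewrite -(isog_simple (third_isog (sub_cosetpre _) (nsN Q) nsHQ)) !cosetpreK.
have -> : (coset N @*^-1 Q / N)%G = Q by apply/val_inj; rewrite /= cosetpreK.
by rewrite quotient_simple ?maxnormal_normal.
Qed.

End CompositionFactors.

Section CompositionFactorsTransfer.
Local Open Scope group_scope.

Lemma ncomp_normal (gT : finGroupType) (G N : {group gT}) m :
  N <| G -> ncomp G m = ncomp N m + ncomp (G / N)%G m.
Proof.
move=> nsNG; have [sN cN] := exists_comps N; have [sQ cQ] := exists_comps (G / N)%G.
have [] := comps_cosetpre cN cQ.
have -> : (coset N @*^-1 (G / N))%G = G by apply/val_inj; rewrite /= quotientGK.
move=> cG eG; rewrite (ncompE m cG) eG count_cat.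
by rewrite (ncompE m cN) (ncompE m cQ) addnC.
Qed.

Lemma comps_injm (gT rT : finGroupType) (D G : {group gT}) (f : {morphism D >-> rT}) s :
  'injm f -> G \subset D -> comps G s ->
  comps (f @* G)%G [seq (f @* K)%G | K <- s] /\
  factor_orders (f @* G)%G [seq (f @* K)%G | K <- s] = factor_orders G s.
Proof.
move=> injf; elim: s G => [|H s IH] G sGD cs.
  split=> //; case/andP: cs => /= /eqP G1 _; rewrite /comps /= andbT.
  by apply/eqP/val_inj; rewrite /= G1 morphim1.
have mx : maxnormal H G G by case/andP: cs => _ /= /andP[].
have sHD := subset_trans (maxnormal_sub mx) sGD.
have [/andP[l2 p2] e2] := IH H sHD (comps_cons cs).
split; last by rewrite /= e2 !card_injm.
by rewrite /comps /= l2 /= p2 andbT injm_maxnormal.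
Qed.

Lemma ncomp_isog (gT rT : finGroupType) (G : {group gT}) (H : {group rT}) m :
  G \isog H -> ncomp G m = ncomp H m.
Proof.
case/isogP => f injf fGH.
have -> : H = (f @* G)%G by apply/val_inj; rewrite /= fGH.
have [s cs] := exists_comps G.
have [cfs efs] := comps_injm injf (subxx G) cs.
by rewrite (ncompE m cs) (ncompE m cfs) efs.
Qed.

Lemma ncomp_dprod (gT : finGroupType) (G A B : {group gT}) m : A \x B = G ->
  ncomp G m = ncomp A m + ncomp B m.
Proof.
move=> dG; have sdG := dprodWsd dG; have [nsAG _ _ _ _] := sdprod_context sdG.
by rewrite (ncomp_normal m nsAG) (ncomp_isog m (sdprod_isog sdG)).
Qed.

End CompositionFactorsTransfer.

Section SymmetricGroups.
Local Open Scope group_scope.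
Variable T : finType.

Lemma ncomp_Sym m : 4 < #|T| -> 2 < m -> ncomp 'Sym_T m = (m == #|'Alt_T|).
Proof.
move=> T5 m3; rewrite (ncomp_normal m (Alt_normal T)) (ncomp_simple m (simple_Alt5 T5)).
rewrite ncomp_gt_card ?addn0 // card_quotient ?Alt_norm // Alt_index //.
exact: leq_trans T5.
Qed.

Lemma center_Sym : 2 < #|T| -> 'Z('Sym_T) = 1.
Proof.
move=> T3; apply/trivgP/subsetP => s /centerP[_ cs]; rewrite inE.
apply/eqP/permP => x; rewrite perm1; apply/eqP/negPn/negP => sx.
have [z _] : exists2 z, z \in [set: T] & z \notin [set x; s x].
  apply/subsetPn; apply: contraL T3 => /subset_leq_card.
  rewrite cardsT cards2 => leT2; rewrite -leqNgt (leq_trans leT2) //.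
  by case: (x != s x).
rewrite !inE negb_or => /andP[zx zsx].
have cxz : commute s (tperm x z) by apply: cs; rewrite inE.
have : tperm x z ^ s = tperm x z by rewrite conjgE -?mulgA -cxz mulKg.
rewrite tpermJ => /(congr1 (fun p : {perm T} => p (s x))).
rewrite tpermL tpermD 1?eq_sym //; last by rewrite eq_sym.
move=> /perm_inj ezx.
by rewrite ezx eqxx in zx.
Qed.

Lemma card_center_Sym2 : #|T| = 2 -> #|'Z('Sym_T)| = 2.
Proof.
move=> T2; have /center_idP-> : abelian 'Sym_T.
  by apply/cyclic_abelian/prime_cyclic; rewrite card_Sym T2.
by rewrite card_Sym T2.
Qed.

End SymmetricGroups.

Section SymSubset.
Local Open Scope group_scope.
Variables (V : finType) (B : {set V}).
Local Notation sB := {x : V | x \in B}.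

Definition extend_perm_fun (p : {perm sB}) (x : V) : V :=
  if insub x is Some u then val (p u) else x.

Lemma extend_perm_fun_inj p : injective (extend_perm_fun p).
Proof.
rewrite /extend_perm_fun => x y.
case: insubP => [u _ <-|xB]; case: insubP => [w _ <-|yB] //.
- by move/val_inj/perm_inj->.
- by move=> e; rewrite -e (valP (p u)) in yB.
- by move=> e; rewrite e (valP (p w)) in xB.
Qed.

Definition extend_perm p : {perm V} := perm (@extend_perm_fun_inj p).

Lemma extend_permE p x : extend_perm p x = extend_perm_fun p x.
Proof. by rewrite permE. Qed.

Lemma extend_perm_morphic : morphic 'Sym_sB extend_perm.
Proof.
apply/morphicP => p q _ _; apply/permP => x; rewrite permM !extend_permE.
rewrite /extend_perm_fun; case: insubP => [u _ _|xB]; last by rewrite insubN.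
by rewrite permM insubT ?(valP (p u)) //= => puB; congr (val (q _)); apply: val_inj.
Qed.

Definition extend_perm_morphism := morphm extend_perm_morphic.

Lemma Sym_sig_isog : 'Sym_sB \isog perm.Sym B.
Proof.
apply/isogP; exists extend_perm_morphism.
  apply/injmP => p q _ _; rewrite /= !morphmE => epq; apply/permP => u.
  have := congr1 (fun r : {perm V} => r (val u)) epq.
  by rewrite !extend_permE /extend_perm_fun valK => /val_inj.
apply/setP => s; apply/idP/idP.
  case/morphimP => p _ _ ->; rewrite inE /= morphmE; apply/subsetP => x.
  rewrite inE extend_permE /extend_perm_fun; case: insubP => [u -> //|_].
  by rewrite eqxx.
rewrite inE => Bs.
have sB_closed (u : sB) : s (val u) \in B by rewrite (perm_closed _ Bs) (valP u).
pose g (u : sB) : sB := Sub (s (val u)) (sB_closed u).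
have ginj : injective g by move=> u w /(congr1 val) /= /perm_inj /val_inj.
apply/morphimP; exists (perm ginj); rewrite ?inE //.
apply/permP => x; rewrite /= morphmE extend_permE /extend_perm_fun.
by case: insubP => [u _ <-|xB]; rewrite ?permE // (out_perm Bs).
Qed.

Lemma ncomp_Sym_set b :
  4 < b -> 1 < #|B| -> ncomp (perm.Sym B) (b`! %/ 2) = (#|B| == b).
Proof.
move=> b5 B2; rewrite -(ncomp_isog _ Sym_sig_isog).
have b60 : 60 <= b`! %/ 2 by rewrite leq_divRL // (leq_trans _ (leq_fact b5)).
have [B4|B5] := leqP #|B| 4.
  rewrite ncomp_gt_card; last first.
    rewrite card_Sym card_sig (leq_ltn_trans (leq_fact B4)) //.
    exact: leq_trans b60.
  by case: eqP B4 => // ->; rewrite leqNgt b5.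
rewrite ncomp_Sym ?card_sig //; last exact: leq_trans b60.
have := card_Alt (T := sB); rewrite card_sig => /(_ B2) AltB.
congr (nat_of_bool _); apply/eqP/eqP => [e|<-]; last by rewrite -AltB mulKn.
have eB : #|B|`! = b`! by rewrite -AltB -e mulnC divnK // dvdn_fact // (leq_trans _ b5).
have bpos : b \in [pred k | 0 < k] by rewrite inE (leq_trans _ b5).
have Bpos : #|B| \in [pred k | 0 < k] by rewrite inE (leq_trans _ B5).
by apply/eqP; rewrite eqn_leq -(leq_pfact Bpos bpos) -(leq_pfact bpos Bpos) eB leqnn.
Qed.

Lemma card_center_Sym_set :
  1 < #|B| -> #|'Z(perm.Sym B)| = (if #|B| == 2 then 2 else 1)%N.
Proof.
move=> B2; rewrite -(card_isog (isog_center Sym_sig_isog)).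
have [|B3] := eqVneq #|B| 2; first by rewrite -card_sig => /card_center_Sym2.
by rewrite /= center_Sym ?cards1 // card_sig ltn_neqAle eq_sym B3.
Qed.

End SymSubset.

Section BlockPermutations.
Local Open Scope group_scope.
Variables (V I : finType) (blk : V -> I).
Implicit Types (j : I) (J : {set I}).

Definition block (j : I) : {set V} := [set v | blk v == j].

Definition block_preserving (s : {perm V}) := [forall v, blk (s v) == blk v].

Definition block_perms (J : {set I}) : {set {perm V}} :=
  [set s | perm_on [set v | blk v \in J] s && block_preserving s].

Lemma block_preservingP (s : {perm V}) :
  reflect (forall v, blk (s v) = blk v) (block_preserving s).
Proof. by apply: (iffP forallP) => h v; apply/eqP. Qed.

Lemma block_perms_group_set J : group_set (block_perms J).
Proof.
apply/group_setP; split.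
  by rewrite inE perm_on1; apply/block_preservingP => v; rewrite perm1.
move=> s u; rewrite !inE => /andP[Js /block_preservingP bs] /andP[Ju /block_preservingP bu].
by rewrite perm_onM //; apply/block_preservingP => v; rewrite permM bu bs.
Qed.
Canonical block_perms_group J := Group (block_perms_group_set J).

Lemma block_perms0 : block_perms set0 = 1.
Proof.
apply/trivgP/subsetP => s; rewrite !inE => /andP[s0 _].
by apply/eqP/permP => x; rewrite perm1 (out_perm s0) // !inE.
Qed.

Lemma Sym_block_sub j J : perm.Sym (block j) \subset block_perms (j |: J).
Proof.
apply/subsetP => u; rewrite !inE => ju; apply/andP; split.
  by apply: subset_trans ju _; apply/subsetP => v; rewrite !inE => ->.
apply/block_preservingP => v; have [vj|vj] := boolP (v \in block j).
  have uvj : u v \in block j by rewrite (perm_closed _ ju).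
  by move: uvj vj; rewrite !inE => /eqP-> /eqP->.
by rewrite (out_perm ju vj).
Qed.

Lemma block_perms_subU1 j J : block_perms J \subset block_perms (j |: J).
Proof.
apply/subsetP => u; rewrite !inE => /andP[Ju ->]; rewrite andbT.
by apply: subset_trans Ju _; apply/subsetP => v; rewrite !inE => ->; rewrite orbT.
Qed.

Lemma block_perms_sub_mulSym j J :
  block_perms (j |: J) \subset perm.Sym (block j) * block_perms J.
Proof.
apply/subsetP => s jJs; have := jJs; rewrite inE => /andP[_ /block_preservingP bs].
have s_stab : s \in 'N(block j | 'P) by apply/astabsP => x; rewrite !inE /= bs.
set u := restr_perm (block j) s.
have ju : u \in perm.Sym (block j) by rewrite inE restr_perm_on.
rewrite -(mulKVg u s) mem_mulg //.
have : u^-1 * s \in block_perms (j |: J).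
  have jJu := subsetP (Sym_block_sub j J) u ju.
  by rewrite (@groupM _ (block_perms_group (j |: J))) ?groupV.
rewrite !inE => /andP[Js ->]; rewrite andbT; apply/subsetP => x mx.
have := subsetP Js x mx; rewrite !inE; have [xj|_] //= := eqVneq (blk x) j.
have yj : u^-1 x \in block j.
  by rewrite (perm_closed _ (perm_onV (restr_perm_on _ s))) inE xj.
by move: mx; rewrite inE permM -(restr_permE s_stab yj) permKV eqxx.
Qed.

Lemma block_perms_dprod j J : j \notin J ->
  perm.Sym (block j) \x block_perms J = block_perms (j |: J).
Proof.
move=> jJ; have disj : [disjoint [set v | blk v \in J] & block j].
  rewrite -setI_eq0; apply/eqP/setP => v; rewrite !inE.
  by apply/andP => -[vJ /eqP vj]; rewrite -vj vJ in jJ.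
rewrite dprodE.
- apply/eqP; rewrite eqEsubset block_perms_sub_mulSym andbT.
  by rewrite mul_subG ?Sym_block_sub ?block_perms_subU1.
- apply/subsetP => s Js; apply/centP => u ju.
  by move: Js ju; rewrite !inE => /andP[Js _] ju; apply: perm_onC Js ju disj.
apply/trivgP/subsetP => s; rewrite !inE => /andP[js /andP[Js _]].
apply/eqP/permP => x; rewrite perm1.
have [xj|xj] := boolP (x \in block j); last by rewrite (out_perm js).
by rewrite (out_perm Js) // (disjointFl disj xj).
Qed.

Lemma big_block_perms (R : Type) (idx : R) (op : Monoid.com_law idx)
    (phi : {group {perm V}} -> R) :
  phi 1%G = idx ->
  (forall G A B : {group {perm V}}, A \x B = G -> phi G = op (phi A) (phi B)) ->
  forall J,
    phi (block_perms_group J) = \big[op/idx]_(j in J) phi (perm.Sym_group (block j)).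
Proof.
move=> phi1 phiM J; have [k] := ubnP #|J|; elim: k J => // k IH J ltJ.
have [->|[j jJ]] := set_0Vmem J.
  by rewrite big_set0 -phi1; congr phi; apply/val_inj; apply: block_perms0.
have jJj : j \notin J :\ j by rewrite !inE eqxx.
rewrite -(setD1K jJ) big_setU1 //= -IH; last by rewrite (cardsD1 j J) jJ in ltJ.
exact: phiM (block_perms_dprod jJj).
Qed.

Lemma block_perms_sub (G : {group {perm V}}) J :
  (forall v w, blk v = blk w -> tperm v w \in G) -> block_perms J \subset G.
Proof.
move=> tpermG; apply/subsetP => s; rewrite inE => /andP[_ /block_preservingP bs].
have [k] := ubnP #|[set x | s x != x]|; elim: k s bs => // k IH s bs lt_s.
have [->|/eqP] := eqVneq s 1; first exact: group1.
case/permP/eqfunP/forallPn => v; rewrite perm1 => svv.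
pose s' := s * tperm (s v) v.
have -> : s = s' * tperm (s v) v by rewrite -mulgA tperm2 mulg1.
rewrite groupM ?tpermG //; apply: IH => [x|].
  by rewrite permM -(bs x); case: tpermP => [->|->|//]; rewrite bs.
rewrite -ltnS (leq_trans _ lt_s) // ltnS; apply: proper_card; rewrite properEneq.
apply/andP; split.
  by apply/eqP => /setP/(_ v); rewrite !inE svv permM tpermL eqxx.
apply/subsetP => x; rewrite !inE; apply: contraNN => /eqP sx; apply/eqP.
rewrite permM sx tpermD //; apply: contraNneq svv.
  by move=> xsv; apply/eqP/(@perm_inj _ s); rewrite xsv sx.
by move=> vx; rewrite vx sx.
Qed.

End BlockPermutations.

Section PartitionComplex.
Variables (m t : nat) (lab : 'I_m -> 'I_t).

Definition vertex_block (v : KVert m t) : 'I_t :=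
  match v with inl i => lab i | inr j => j end.

Local Notation blk := vertex_block.

Lemma tperm_Cox v w : blk v = blk w -> tperm v w \in Cox lab.
Proof.
have star x : tperm x (inr (blk x)) \in Cox lab.
  case: x => [i|j] /=; last by rewrite tperm1 group1.
  by apply: mem_gen; apply/imsetP; exists i.
move=> vw; set c : KVert m t := inr (blk w).
have [->|nvw] := eqVneq v w; first by rewrite tperm1 group1.
have [->|nvc] := eqVneq v c; first by rewrite tpermC star.
have [->|nwc] := eqVneq w c; first by rewrite /c -vw star.
(* (v w) = (w c) ^ (v c), where c = p_j is the new vertex of the common block *)
have := groupJ (star v) (star w); rewrite tpermJ vw -/c tpermR tpermD //.
all: by rewrite eq_sym.
Qed.

Lemma Cox_block_perms : Cox lab = block_perms_group blk setT.
Proof.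
apply/val_inj/eqP; rewrite eqEsubset block_perms_sub ?andbT; last exact: tperm_Cox.
rewrite gen_subG; apply/subsetP => _ /imsetP[i _ ->]; rewrite !inE.
apply/andP; split; first by apply/subsetP => v; rewrite !inE.
by apply/block_preservingP => v; case: tpermP => [->|->|]...
Qed.

Lemma card_block_gt1 j : (exists i, lab i = j) -> 1 < #|block blk j|.
Proof.
case=> i li; have ijB : [set inl i; inr j] \subset block blk j.
  by apply/subsetP => v; rewrite !inE => /orP[] /eqP-> /=; rewrite ?li.
by rewrite (leq_trans _ (subset_leq_card ijB)) ?cards2.
Qed.

Lemma is_faceE (S : {set KVert m t}) :
  is_face lab S = (S != set0) && [forall j, ~~ (block blk j \subset S)].
Proof.
rewrite /is_face; case: (S != set0) => //=; apply/existsP/forallP.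
  case=> F /andP[/existsP[c /andP[injc /eqP eF]] sSF] j; apply/negP => sBS.
  have BF v : v \in block blk j -> v \in F.
    by move=> vB; apply/(subsetP sSF)/(subsetP sBS).
  have : inr j \in F by apply: BF; rewrite inE.
  rewrite eF => /imsetP[i _]; rewrite /yvert; case ci: (c i) => // -[ji].
  have : inl i \in F by apply: BF; rewrite inE /= ji.
  rewrite eF => /imsetP[i' _]; rewrite /yvert; case ci': (c i') => // -[ii'].
  by rewrite ii' ci' in ci.
(* choose in each block a vertex outside S; the facet takes p_j iff that vertex is p_j *)
move=> noBS; pose u j := odflt (inr j) [pick v | (v \in block blk j) && (v \notin S)].
have uP j : u j \in block blk j /\ u j \notin S.
  rewrite /u; case: pickP => [v /andP[-> ->] //|none].
  case/negP: (noBS j); apply/subsetP => v vB.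
  by have := none v; rewrite vB /= => /negbFE.
pose c := [ffun i => u (lab i) == inl i].
exists [set yvert lab c i | i : 'I_m]; apply/andP; split.
  apply/existsP; exists c; rewrite eqxx andbT; apply/injectiveP => i1 i2.
  rewrite /yvert !ffunE; case: eqP => [e1|_]; case: eqP => [e2|_] //.
  - by case=> e; move: e1; rewrite e e2 => -[].
  - by case.
apply/subsetP => v vS; apply/imsetP; case: v vS => [i|j] vS.
  exists i => //; rewrite /yvert ffunE; case: eqP => // e.
  by have [_] := uP (lab i); rewrite e vS.
have [] := uP j; rewrite inE; case E: (u j) => [i|j'] /=.
  by move=> /eqP li _; exists i => //; rewrite /yvert ffunE li E eqxx.
by move=> /eqP ej; rewrite ej vS.
Qed.

End PartitionComplex.

Lemma complex_iso_of_blocks m t m' t' (lab : 'I_m -> 'I_t) (lab' : 'I_m' -> 'I_t')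
    (f : KVert m t -> KVert m' t') (g : 'I_t -> 'I_t') :
  bijective f -> bijective g ->
  (forall v, vertex_block lab' (f v) = g (vertex_block lab v)) ->
  complex_iso lab lab'.
Proof.
move=> bf [g' gK g'K] fg; exists f; split => // S.
have injf := bij_inj bf.
have fB j : f @: block (vertex_block lab) j = block (vertex_block lab') (g j).
  apply/setP => w; case: bf => f' fK f'K.
  by rewrite -(f'K w) (mem_imset _ _ injf) !inE fg (can_eq gK).
have subB j : (block (vertex_block lab) j \subset S) =
              (block (vertex_block lab') (g j) \subset f @: S).
  rewrite -fB; apply/idP/idP => [/imsetS //|/subsetP BS]; apply/subsetP => v vB.
  by rewrite -(mem_imset _ _ injf) BS ?imset_f.
rewrite !is_faceE imset_eq0; congr (_ && _); apply/forallP/forallP => BS j.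
  by rewrite -(g'K j) -subB.
by rewrite subB.
Qed.

Section SumsByValue.
Variables (I : finType) (a : I -> nat).

Lemma sum_bool_card (P : pred I) : #|[pred i | P i]| = \sum_i (P i : nat).
Proof.
rewrite -sum1_card big_mkcond /=; apply: eq_bigr => i _.
by rewrite !inE; case: (P i).
Qed.

Lemma logn_prod_fact p : logn p (\prod_i (a i)`!) = \sum_i logn p (a i)`!.
Proof.
suff [] : 0 < \prod_i (a i)`! /\ logn p (\prod_i (a i)`!) = \sum_i logn p (a i)`! by [].
elim/big_rec2: _ => [|i x y _ [x0 <-]]; first by rewrite logn1.
by rewrite muln_gt0 fact_gt0 x0 lognM ?fact_gt0.
Qed.

Lemma sum_by_value (g : nat -> nat) M : (forall i, a i < M) ->
  \sum_i g (a i) = \sum_(k < M) (\sum_i (a i == k)) * g k.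
Proof.
move=> aM; under [RHS]eq_bigr => k _ do rewrite big_distrl /=.
rewrite exchange_big /=; apply: eq_bigr => i _.
rewrite (bigD1 (Ordinal (aM i))) //= eqxx mul1n big1 ?addn0 // => k /negbTE.
by rewrite -val_eqE /= eq_sym => ->.
Qed.

Lemma prod_center_orders : \prod_i (if a i == 2 then 2 else 1) = 2 ^ (\sum_i (a i == 2)).
Proof. by rewrite expn_sum; apply: eq_bigr => i _; case: (a i == 2). Qed.

End SumsByValue.

Section CountingBlockSizes.
Variables (I J : finType) (a : I -> nat) (b : J -> nat).

Local Notation ca k := (\sum_i (a i == k)).
Local Notation cb k := (\sum_j (b j == k)).

Lemma eq_counts_of_invariants :
  (forall i, 1 < a i) -> (forall j, 1 < b j) ->
  (forall k, 4 < k -> ca k = cb k) -> ca 2 = cb 2 ->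
  \prod_i (a i)`! = \prod_j (b j)`! ->
  forall k, ca k = cb k.
Proof.
move=> a1 b1 c_big c2 fact_ab.
have rest k : k != 3 -> k != 4 -> ca k = cb k.
  move=> k3 k4; have [k1|k2] := ltnP k 2.
    have size_neq c : 1 < c -> (c == k) = 0 :> nat by case: eqP => // ->; lia.
    by rewrite !big1 // => x _; apply: size_neq.
  have [k5|k4'] := ltnP 4 k; first exact: c_big.
  by have -> : k = 2 by lia.
pose M := (\sum_i a i + \sum_j b j + 4).+1.
have aM i : a i < M by rewrite /M (bigD1 i) //=; lia.
have bM j : b j < M by rewrite /M (bigD1 j) //=; lia.
pose i3 : 'I_M := inord 3; pose i4 : 'I_M := inord 4.
have v3 : val i3 = 3 by rewrite /= inordK // /M; lia.
have v4 : val i4 = 4 by rewrite /= inordK // /M; lia.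
have n43 : i4 != i3 by rewrite -val_eqE v3 v4.
(* only the blocks of sizes 3 and 4 are left: compare the p-adic valuations
   of the orders for p = 2, 3 *)
have key p :
    ca 3 * logn p 3`! + ca 4 * logn p 4`! = cb 3 * logn p 3`! + cb 4 * logn p 4`!.
  have := congr1 (logn p) fact_ab; rewrite !logn_prod_fact.
  rewrite (sum_by_value (fun k => logn p k`!) aM) (sum_by_value (fun k => logn p k`!) bM).
  rewrite (bigD1 i3) // (bigD1 i3 (P := xpredT)) //.
  rewrite !(bigD1 i4 (P := fun i : 'I_M => true && (i != i3))) ?n43 //= v3 v4.
  rewrite [X in _ + (_ + X) = _](eq_bigr (fun k : 'I_M => cb k * logn p k`!)).
    by rewrite !addnA => /addIn.
  move=> k /andP[k3 k4]; rewrite rest //; first by rewrite -v3 val_eqE.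
  by rewrite -v4 val_eqE.
have := key 2; have := key 3.
rewrite (_ : logn 2 3`! = 1) // (_ : logn 2 4`! = 3) //.
rewrite (_ : logn 3 3`! = 1) // (_ : logn 3 4`! = 1) //.
move=> e3 e2 k; have [->|k3] := eqVneq k 3; first lia.
have [->|k4] := eqVneq k 4; first lia.
exact: rest.
Qed.

End CountingBlockSizes.

Section FiberBijection.
Variables (K : eqType) (X Y : finType) (p : X -> K) (q : Y -> K).

(* The default y0 is never returned: the index of x in its fiber is within range. *)
Definition fiber_map (y0 : Y) (x : X) : Y :=
  nth y0 (enum [pred y | q y == p x]) (index x (enum [pred x' | p x' == p x])).

Hypothesis eq_fibers : forall k, #|[pred x | p x == k]| = #|[pred y | q y == k]|.

Lemma fiber_mapP y0 x : q (fiber_map y0 x) = p x.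
Proof.
have xF : x \in enum [pred x' | p x' == p x] by rewrite mem_enum inE.
have : fiber_map y0 x \in enum [pred y | q y == p x].
  by rewrite mem_nth // -!cardE -eq_fibers cardE index_mem.
by rewrite mem_enum inE => /eqP.
Qed.

End FiberBijection.

Lemma fiber_mapK (K : eqType) (X Y : finType) (p : X -> K) (q : Y -> K) x0 y0 :
  (forall k, #|[pred x | p x == k]| = #|[pred y | q y == k]|) ->
  cancel (fiber_map p q y0) (fiber_map q p x0).
Proof.
move=> eq_fibers x; rewrite {1}/fiber_map (fiber_mapP eq_fibers y0).
rewrite index_uniq ?enum_uniq ?nth_index ?mem_enum ?inE //.
by rewrite -cardE -eq_fibers cardE index_mem mem_enum inE.
Qed.

Lemma fiber_bij (K : eqType) (X Y : finType) (p : X -> K) (q : Y -> K)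
    (x0 : X) (y0 : Y) :
  (forall k, #|[pred x | p x == k]| = #|[pred y | q y == k]|) ->
  exists f : X -> Y, bijective f /\ forall x, q (f x) = p x.
Proof.
move=> eq_fibers; exists (fiber_map p q y0); split; last exact: fiber_mapP.
by exists (fiber_map q p x0); apply: fiber_mapK.
Qed.

Section CoxInvariants.
Local Open Scope group_scope.
Variables (m t : nat) (lab : 'I_m -> 'I_t).
Local Notation B j := (block (vertex_block lab) j).

Lemma ncomp_Cox k : ncomp (Cox lab) k = \sum_j ncomp (perm.Sym_group (B j)) k.
Proof.
rewrite Cox_block_perms.
rewrite (big_block_perms (op := addn) (phi := fun G => ncomp G k) _ (ncomp1 _ k)).
  by apply: eq_bigl => j; rewrite inE.
by move=> G A1 A2 /ncomp_dprod->.
Qed.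

Lemma card_Cox : #|Cox lab| = (\prod_j #|B j|`!)%N.
Proof.
rewrite Cox_block_perms (big_block_perms (op := muln) (phi := fun G => #|G|) _ (cards1 _)).
  by apply: eq_big => [j|j _]; rewrite ?inE ?perm.card_Sym.
by move=> G A1 A2 /dprod_card<-.
Qed.

Lemma card_center_Cox : #|'Z(Cox lab)| = (\prod_j #|'Z(perm.Sym (B j))|)%N.
Proof.
rewrite Cox_block_perms (big_block_perms (op := muln) (phi := fun G => #|'Z(G)|) _).
- by apply: eq_bigl => j; rewrite inE.
- by rewrite center1 cards1.
by move=> G A1 A2 /center_dprod/dprod_card<-.
Qed.

End CoxInvariants.

Lemma Cox_isog_block_counts n t n' t' (lab : 'I_n -> 'I_t) (lab' : 'I_n' -> 'I_t') :
  is_partition_lab lab -> is_partition_lab lab' -> Cox lab \isog Cox lab' ->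
  forall k, #|[pred j | #|block (vertex_block lab) j| == k]| =
            #|[pred j | #|block (vertex_block lab') j| == k]|.
Proof.
move=> lab_onto lab'_onto iso k; rewrite !sum_bool_card.
have B1 j : 1 < #|block (vertex_block lab) j| by apply/card_block_gt1/lab_onto.
have B1' j : 1 < #|block (vertex_block lab') j| by apply/card_block_gt1/lab'_onto.
apply: (eq_counts_of_invariants B1 B1') => [l l5||].
- have := ncomp_isog (l`! %/ 2) iso; rewrite !ncomp_Cox.
  under eq_bigr => j _ do rewrite ncomp_Sym_set //.
  by under [in RHS]eq_bigr => j _ do rewrite ncomp_Sym_set //.
- have := card_isog (isog_center iso); rewrite !card_center_Cox.
  under eq_bigr => j _ do rewrite card_center_Sym_set //.
  under [in RHS]eq_bigr => j _ do rewrite card_center_Sym_set //.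
  by rewrite !prod_center_orders => /expnI; apply.
- by have := card_isog iso; rewrite !card_Cox.
Qed.

Theorem proposition2p9 (n n' t t' : nat)
  (lab : 'I_n.+1 -> 'I_t) (lab' : 'I_n'.+1 -> 'I_t') :
  2 <= n -> 2 <= n' ->
  is_partition_lab lab -> is_partition_lab lab' ->
  (Cox lab \isog Cox lab') ->
  complex_iso lab lab'.
Proof.
move=> _ _ lab_onto lab'_onto iso.
have [g [bij_g size_g]] : exists g : 'I_t -> 'I_t', bijective g /\
    forall j, #|block (vertex_block lab') (g j)| = #|block (vertex_block lab) j|.
  exact: fiber_bij (lab ord0) (lab' ord0) (Cox_isog_block_counts lab_onto lab'_onto iso).
have [f [bij_f f_block]] : exists f : KVert n.+1 t -> KVert n'.+1 t',
    bijective f /\ forall v, vertex_block lab' (f v) = g (vertex_block lab v).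
  apply: fiber_bij (inl ord0) (inl ord0) _ => k; have [g' gK g'K] := bij_g.
  have -> :
      #|[pred v | g (vertex_block lab v) == k]| = #|block (vertex_block lab) (g' k)|.
    by apply: eq_card => v; rewrite !inE -{1}(g'K k) (can_eq gK).
  by rewrite -size_g g'K; apply: eq_card => w; rewrite !inE.
exact: complex_iso_of_blocks bij_f bij_g f_block.
Qed.
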